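(* Let $a/b$ be a rational number in lowest terms with $b\geq1$. Suppose $\zeta>0$ satisfies $\zeta\in\mathscr{L}$ and $\zeta^{a/b}\in\mathscr{L}$. Then for every $\eta>0$ the inequality $|q^b\zeta^a-p^b|\leq q^{-\eta}$ has a solution in coprime integers $p,q$ with $q\geq1$. Moreover, for fixed $\eta>b$, if $(p,q)$ is such a solution with $q$ sufficiently large, then $p^b/q^b$ is a convergent of the continued fraction expansion of $\zeta^a$.
   Context: $\mathscr{L}$ is the set of Liouville numbers (real irrational $\zeta$ such that for every $\eta>0$ there are infinitely many rationals $y/x$, $x\geq1$, with $|\zeta-y/x|\leq x^{-\eta}$). *)

From Stdlib Require Export Reals ZArith List.
Open Scope R_scope.

Definition irrational (z : R) : Prop :=
  forall p q : Z, q <> 0%Z -> z <> IZR p / IZR q.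

(* Liouville numbers: real irrational z such that for every eta > 0 there are
   infinitely many rationals y/x (x >= 1) with |z - y/x| <= x^(-eta).
   "Infinitely many rationals" = the set of such values y/x is not contained
   in any finite list of reals. *)
Definition Liouville (z : R) : Prop :=
  irrational z /\
  forall eta : R, 0 < eta ->
    forall l : list R, exists y x : Z,
      (1 <= x)%Z /\
      Rabs (z - IZR y / IZR x) <= Rpower (IZR x) (- eta) /\
      ~ In (IZR y / IZR x) l.

(* Regular continued fraction expansion of a real x:
   complete quotients x_0 = x, x_{n+1} = 1 / frac(x_n);
   partial quotients a_n = floor(x_n)  (Int_part = floor). *)
Fixpoint cf_rem (x : R) (n : nat) : R :=
  match n with
  | O => x
  | S m => / frac_part (cf_rem x m)
  end.

Definition cf_digit (x : R) (n : nat) : Z := Int_part (cf_rem x n).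

(* (p_n, q_n, p_{n-1}, q_{n-1}) with p_{-1} = 1, q_{-1} = 0,
   p_n = a_n p_{n-1} + p_{n-2}, q_n = a_n q_{n-1} + q_{n-2}. *)
Fixpoint cf_pq (x : R) (n : nat) : Z * Z * Z * Z :=
  match n with
  | O => (cf_digit x 0, 1%Z, 1%Z, 0%Z)
  | S m =>
      let '(p, q, p', q') := cf_pq x m in
      let a := cf_digit x (S m) in
      ((a * p + p')%Z, (a * q + q')%Z, p, q)
  end.

Definition cf_num (x : R) (n : nat) : Z := let '(p, _, _, _) := cf_pq x n in p.
Definition cf_den (x : R) (n : nat) : Z := let '(_, q, _, _) := cf_pq x n in q.

Definition is_convergent (x r : R) : Prop :=
  exists n : nat, r = IZR (cf_num x n) / IZR (cf_den x n).

(* Put [th = zeta ^ (a/b)], so that [zeta ^ a = th ^ b]; only the Liouville property of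
   [th] is used.  If [|th - p/q| <= q^-n] with [n] large, then [q^b th^b - p^b] is tiny,
   which gives the first claim; the same estimate applied to the integer [u q^b - v p^b]
   shows that [th ^ b] cannot equal [u/v].  For [eta > b] and [q] large the bound yields
   [2 q^b |q^b th^b - p^b| < 1], and Legendre's criterion ([|s x - r| < 1/(2s)] forces
   [r/s] to be a convergent of the irrational [x]) gives the second claim.  Legendre's
   criterion follows from the recurrences: consecutive convergents have determinant
   [+-1] and errors of opposite signs, so [p_n/q_n] is a best approximation among
   denominators below [q_(n+1)]. *)

From Stdlib Require Import Reals ZArith List Lra Lia.
Open Scope R_scope.

Lemma irrational_frac_part_pos z : irrational z -> 0 < frac_part z.
Proof.
  intros Hz. destruct (base_fp z) as [Hge _].
  destruct (Req_dec (frac_part z) 0) as [H0 | Hne]; [|lra].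
  exfalso. apply (Hz (Int_part z) 1%Z); [lia|].
  rewrite (Rplus_Int_part_frac_part z) at 1. rewrite H0. simpl. field.
Qed.

Lemma irrational_inv_frac_part z : irrational z -> irrational (/ frac_part z).
Proof.
  intros Hz p q Hq Heq.
  pose proof (irrational_frac_part_pos z Hz) as Hf.
  assert (Hq' : IZR q <> 0) by (apply not_0_IZR; exact Hq).
  assert (Hp : IZR p <> 0).
  { intro E. rewrite E in Heq. unfold Rdiv in Heq. rewrite Rmult_0_l in Heq.
    pose proof (Rinv_0_lt_compat _ Hf). lra. }
  apply (Hz (Int_part z * p + q)%Z p); [intro E; subst; apply Hp; reflexivity|].
  assert (Ef : frac_part z = IZR q / IZR p).
  { rewrite <- (Rinv_inv (frac_part z)), Heq. field. auto. }
  rewrite (Rplus_Int_part_frac_part z) at 1. rewrite Ef, plus_IZR, mult_IZR.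
  field. exact Hp.
Qed.

Section ContinuedFraction.

Variable x : R.
Hypothesis x_irrational : irrational x.

Lemma cf_rem_irrational n : irrational (cf_rem x n).
Proof. induction n; simpl; [exact x_irrational | apply irrational_inv_frac_part; exact IHn]. Qed.

Lemma cf_rem_succ_gt1 n : 1 < cf_rem x (S n).
Proof.
  simpl. pose proof (irrational_frac_part_pos _ (cf_rem_irrational n)).
  destruct (base_fp (cf_rem x n)) as [_ Hlt].
  rewrite <- Rinv_1. apply Rinv_lt_contravar; lra.
Qed.

Lemma cf_rem_expand n : cf_rem x n = IZR (cf_digit x n) + / cf_rem x (S n).
Proof.
  simpl. rewrite Rinv_inv. apply Rplus_Int_part_frac_part.
Qed.

Lemma cf_digit_succ_pos n : (1 <= cf_digit x (S n))%Z.
Proof.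
  pose proof (cf_rem_succ_gt1 n) as H.
  unfold cf_digit, Int_part. destruct (archimed (cf_rem x (S n))) as [A _].
  assert (1 < up (cf_rem x (S n)))%Z by (apply lt_IZR; lra). lia.
Qed.

(* [T = (p_n, q_n, p_(n-1), q_(n-1))]; the last conjunct is
   [x = (p_n x_(n+1) + p_(n-1)) / (q_n x_(n+1) + q_(n-1))] with [x_(n+1) = cf_rem x (S n)]. *)
Definition cf_invariant (n : nat) (T : Z * Z * Z * Z) : Prop :=
  let '(p, q, p', q') := T in
  Z.abs (p * q' - p' * q) = 1%Z /\ (1 <= q)%Z /\ (Z.of_nat n <= q)%Z /\
  (0 <= q')%Z /\ ((0 < n)%nat -> (1 <= q')%Z) /\
  x * (IZR q * cf_rem x (S n) + IZR q') = IZR p * cf_rem x (S n) + IZR p'.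

Lemma cf_pq_invariant n : cf_invariant n (cf_pq x n).
Proof.
  induction n as [|n IH].
  - change (cf_pq x 0) with (cf_digit x 0, 1%Z, 1%Z, 0%Z).
    repeat split; try lia.
    pose proof (cf_rem_expand 0) as E. pose proof (cf_rem_succ_gt1 0).
    change (cf_rem x 0) with x in E. rewrite E at 1. field. lra.
  - simpl cf_pq. destruct (cf_pq x n) as [[[p q] p'] q'].
    destruct IH as (Hdet & Hq & Hqn & Hq' & Hq'pos & Hx).
    pose proof (cf_digit_succ_pos n) as Ha.
    set (a := cf_digit x (S n)) in *.
    set (X := cf_rem x (S n)) in *. set (Y := cf_rem x (S (S n))).
    assert (HXY : X * Y = IZR a * Y + 1).
    { unfold X, Y, a. rewrite (cf_rem_expand (S n)) at 1.
      pose proof (cf_rem_succ_gt1 (S n)). field. lra. }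
    repeat split; try lia.
    + rewrite Nat2Z.inj_succ.
      destruct n; [nia | specialize (Hq'pos ltac:(lia)); nia].
    + fold Y. rewrite !plus_IZR, !mult_IZR.
      apply Rminus_diag_uniq.
      transitivity ((x * (IZR q * X + IZR q') - (IZR p * X + IZR p')) * Y
                    + (IZR q * x - IZR p) * (IZR a * Y + 1 - X * Y)); [ring|].
      rewrite Hx, HXY. ring.
Qed.


Lemma cf_pq_succ n :
  cf_pq x (S n) = (cf_num x (S n), cf_den x (S n), cf_num x n, cf_den x n).
Proof.
  unfold cf_num, cf_den. simpl cf_pq.
  destruct (cf_pq x n) as [[[p q] p'] q']. reflexivity.
Qed.

Lemma cf_den_pos n : (1 <= cf_den x n)%Z.
Proof.
  pose proof (cf_pq_invariant n) as I. unfold cf_den.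
  destruct (cf_pq x n) as [[[p q] p'] q']. apply I.
Qed.

Lemma cf_den_ge_index n : (Z.of_nat n <= cf_den x n)%Z.
Proof.
  pose proof (cf_pq_invariant n) as I. unfold cf_den.
  destruct (cf_pq x n) as [[[p q] p'] q']. apply I.
Qed.

Lemma cf_det n :
  Z.abs (cf_num x (S n) * cf_den x n - cf_num x n * cf_den x (S n)) = 1%Z.
Proof. pose proof (cf_pq_invariant (S n)) as I. rewrite cf_pq_succ in I. apply I. Qed.

Lemma cf_rem_mobius n :
  x * (IZR (cf_den x (S n)) * cf_rem x (S (S n)) + IZR (cf_den x n))
  = IZR (cf_num x (S n)) * cf_rem x (S (S n)) + IZR (cf_num x n).
Proof. pose proof (cf_pq_invariant (S n)) as I. rewrite cf_pq_succ in I. apply I. Qed.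

Lemma cf_errors_opposite n :
  (IZR (cf_den x n) * x - IZR (cf_num x n))
  * (IZR (cf_den x (S n)) * x - IZR (cf_num x (S n))) < 0.
Proof.
  pose proof (cf_rem_mobius n) as Hx. pose proof (cf_det n) as Hdet.
  pose proof (cf_rem_succ_gt1 (S n)) as HY.
  pose proof (cf_den_pos n) as Hq. pose proof (cf_den_pos (S n)) as HQ.
  set (p := cf_num x n) in *. set (q := cf_den x n) in *.
  set (P := cf_num x (S n)) in *. set (Q := cf_den x (S n)) in *.
  set (Y := cf_rem x (S (S n))) in *.
  set (d := (P * q - p * Q)%Z) in *.
  assert (Hd2 : IZR d * IZR d = 1).
  { rewrite <- mult_IZR. f_equal. destruct (Z.abs_spec d); lia. }
  assert (HqR : 1 <= IZR q) by (apply IZR_le; exact Hq).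
  assert (HQR : 1 <= IZR Q) by (apply IZR_le; exact HQ).
  set (D := IZR Q * Y + IZR q).
  assert (HD : 0 < D) by (unfold D; nra).
  (* Multiplying both errors by [D] and using [x D = P Y + p] gives [Y d] and [- d]. *)
  assert (Hprod : (IZR q * x - IZR p) * (IZR Q * x - IZR P) * (D * D) = - Y).
  { transitivity (- Y * (IZR d * IZR d)); [|rewrite Hd2; ring].
    transitivity ((IZR q * (x * D) - IZR p * D) * (IZR Q * (x * D) - IZR P * D)); [ring|].
    unfold D. rewrite Hx. unfold d. rewrite minus_IZR, !mult_IZR. ring. }
  assert (0 < D * D) by nra. nra.
Qed.

Lemma cf_den_bracket s : (1 <= s)%Z ->
  exists n, (cf_den x n <= s < cf_den x (S n))%Z.
Proof.
  intros Hs.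
  assert (Hk : forall k, (s < cf_den x k)%Z -> exists n, (cf_den x n <= s < cf_den x (S n))%Z).
  { induction k as [|k IH]; intros Hk.
    - change (cf_den x 0) with 1%Z in Hk. lia.
    - destruct (Z_le_gt_dec (cf_den x k) s); [exists k; lia | apply IH; lia]. }
  apply (Hk (S (Z.to_nat s))). pose proof (cf_den_ge_index (S (Z.to_nat s))). lia.
Qed.

End ContinuedFraction.

Lemma Rabs_le_Rabs_add_same_sign a b : 0 <= a * b -> Rabs a <= Rabs (a + b).
Proof.
  intros Hab. unfold Rabs.
  destruct (Rcase_abs a); destruct (Rcase_abs (a + b)); nra.
Qed.

(* Writing [(r, s)] in the unimodular basis [(p, q), (P, Q)] as [u (p, q) + v (P, Q)],
   the bounds [1 <= s < Q] force [u <> 0] and [u v <= 0]. *)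
Lemma best_approximation_of_opposite_errors x p q P Q r s :
  Z.abs (P * q - p * Q) = 1%Z -> (0 <= q)%Z -> (1 <= s < Q)%Z ->
  (IZR q * x - IZR p) * (IZR Q * x - IZR P) <= 0 ->
  Rabs (IZR q * x - IZR p) <= Rabs (IZR s * x - IZR r).
Proof.
  intros Hdet Hq Hs Hsign.
  set (d := (P * q - p * Q)%Z) in *.
  assert (Hd2 : (d * d = 1)%Z) by (destruct (Z.abs_spec d); lia).
  set (u := (- d * (r * Q - s * P))%Z).
  set (v := (- d * (p * s - q * r))%Z).
  assert (Hr : (u * p + v * P = r)%Z).
  { transitivity (r * (d * d))%Z; [unfold u, v, d; ring | rewrite Hd2; ring]. }
  assert (Hs' : (u * q + v * Q = s)%Z).
  { transitivity (s * (d * d))%Z; [unfold u, v, d; ring | rewrite Hd2; ring]. }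
  clearbody u v.
  assert (Hu : (1 <= Z.abs u)%Z).
  { destruct (Z.eq_dec u 0) as [-> | ]; [|lia].
    destruct (Z_le_gt_dec v 0); nia. }
  assert (Huv : IZR u * IZR v <= 0).
  { rewrite <- mult_IZR. apply IZR_le.
    destruct (Z_le_gt_dec u 0); destruct (Z_le_gt_dec v 0); nia. }
  set (e := IZR q * x - IZR p) in *. set (E := IZR Q * x - IZR P) in *.
  assert (Hdecomp : IZR s * x - IZR r = IZR u * e + IZR v * E).
  { rewrite <- Hr, <- Hs', !plus_IZR, !mult_IZR. unfold e, E. ring. }
  rewrite Hdecomp.
  apply Rle_trans with (Rabs (IZR u * e)).
  - rewrite Rabs_mult, <- abs_IZR.
    assert (1 <= IZR (Z.abs u)) by (apply IZR_le; exact Hu).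
    pose proof (Rabs_pos e). nra.
  - apply Rabs_le_Rabs_add_same_sign. nra.
Qed.

(* If [r/s <> p/q] then [1 <= |r q - s p| <= q |s x - r| + s |q x - p| <= 2 s |s x - r|]. *)
Lemma eq_of_better_approximation x p q r s :
  (1 <= q <= s)%Z ->
  Rabs (IZR q * x - IZR p) <= Rabs (IZR s * x - IZR r) ->
  2 * IZR s * Rabs (IZR s * x - IZR r) < 1 ->
  (r * q = s * p)%Z.
Proof.
  intros Hqs Hbetter Hclose.
  destruct (Z.eq_dec (r * q) (s * p)) as [Heq | Hne]; [exact Heq | exfalso].
  assert (H1 : 1 <= Rabs (IZR (r * q - s * p))) by (rewrite <- abs_IZR; apply IZR_le; lia).
  assert (Hid : IZR (r * q - s * p)
                = - (IZR q * (IZR s * x - IZR r)) + IZR s * (IZR q * x - IZR p)).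
  { rewrite minus_IZR, !mult_IZR. ring. }
  rewrite Hid in H1.
  pose proof (Rabs_triang (- (IZR q * (IZR s * x - IZR r))) (IZR s * (IZR q * x - IZR p))) as Htri.
  rewrite Rabs_Ropp, !Rabs_mult, (Rabs_right (IZR q)), (Rabs_right (IZR s)) in Htri
    by (apply Rle_ge, IZR_le; lia).
  assert (HqR : 1 <= IZR q) by (apply IZR_le; lia).
  assert (HqsR : IZR q <= IZR s) by (apply IZR_le; lia).
  pose proof (Rabs_pos (IZR s * x - IZR r)).
  assert (IZR s * Rabs (IZR q * x - IZR p) <= IZR s * Rabs (IZR s * x - IZR r))
    by (apply Rmult_le_compat_l; lra).
  nra.
Qed.

Theorem legendre_convergent x r s : irrational x -> (1 <= s)%Z ->
  2 * IZR s * Rabs (IZR s * x - IZR r) < 1 -> is_convergent x (IZR r / IZR s).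
Proof.
  intros Hx Hs Hclose.
  destruct (cf_den_bracket x Hx s Hs) as [n Hn].
  pose proof (cf_den_pos x Hx n) as Hq.
  assert (Hbetter := best_approximation_of_opposite_errors x _ _ _ _ r s
    (cf_det x Hx n) ltac:(lia) ltac:(lia) (Rlt_le _ _ (cf_errors_opposite x Hx n))).
  pose proof (eq_of_better_approximation x (cf_num x n) (cf_den x n) r s
    ltac:(lia) Hbetter Hclose) as Heq.
  exists n.
  assert (IZR s <> 0) by (apply not_0_IZR; lia).
  assert (IZR (cf_den x n) <> 0) by (apply not_0_IZR; lia).
  apply (f_equal IZR) in Heq. rewrite !mult_IZR in Heq.
  field_simplify_eq; [lra | auto].
Qed.

Lemma INR_le_pow r k : 2 <= r -> INR k <= r ^ k.
Proof.
  intros Hr. induction k as [|k IH]; [simpl; lra|].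
  rewrite S_INR, <- tech_pow_Rmult.
  assert (1 <= r ^ k) by (apply pow_R1_Rle; lra). nra.
Qed.

Lemma pow_lt_compat_l a c n : 0 <= a < c -> n <> 0%nat -> a ^ n < c ^ n.
Proof.
  intros Hac Hn. destruct n as [|n]; [lia|]. clear Hn.
  induction n as [|n IH]; [simpl; lra|].
  rewrite <- (tech_pow_Rmult a), <- (tech_pow_Rmult c).
  assert (0 <= a ^ S n) by (apply pow_le; lra). nra.
Qed.

Lemma pow_eq_Rabs a c n : n <> 0%nat -> a ^ n = c ^ n -> Rabs a = Rabs c.
Proof.
  intros Hn Heq.
  assert (E : Rabs a ^ n = Rabs c ^ n) by (rewrite !RPow_abs, Heq; reflexivity).
  destruct (Rtotal_order (Rabs a) (Rabs c)) as [L | [L | L]]; [| exact L |].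
  - pose proof (pow_lt_compat_l _ _ n (conj (Rabs_pos a) L) Hn). lra.
  - pose proof (pow_lt_compat_l _ _ n (conj (Rabs_pos c) L) Hn). lra.
Qed.

Lemma Rabs_pow_sub_le n a c M : 1 <= M -> Rabs a <= M -> Rabs c <= M ->
  Rabs (a ^ n - c ^ n) <= INR n * M ^ n * Rabs (a - c).
Proof.
  intros HM Ha Hc. induction n as [|n IH].
  - simpl. rewrite Rminus_diag, Rabs_R0. lra.
  - replace (a ^ S n - c ^ S n) with (a ^ n * (a - c) + c * (a ^ n - c ^ n)) by (simpl; ring).
    eapply Rle_trans; [apply Rabs_triang|]. rewrite !Rabs_mult, <- RPow_abs.
    assert (Hn : Rabs a ^ n <= M ^ n) by (apply pow_incr; split; [apply Rabs_pos | exact Ha]).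
    assert (HMn : 1 <= M ^ n) by (apply pow_R1_Rle; exact HM).
    pose proof (Rabs_pos (a - c)). pose proof (Rabs_pos c).
    pose proof (Rabs_pos (a ^ n - c ^ n)). pose proof (pos_INR n).
    rewrite S_INR, <- tech_pow_Rmult.
    assert (Rabs a ^ n * Rabs (a - c) <= M * M ^ n * Rabs (a - c)) by
      (apply Rmult_le_compat_r; nra).
    assert (Rabs c * Rabs (a ^ n - c ^ n) <= M * (INR n * M ^ n * Rabs (a - c)))
      by (apply Rmult_le_compat; auto).
    nra.
Qed.

Lemma reduce_fraction y x : (1 <= x)%Z ->
  exists p q, (1 <= q <= x)%Z /\ Z.gcd p q = 1%Z /\ IZR y / IZR x = IZR p / IZR q.
Proof.
  intros Hx.
  set (g := Z.gcd y x).
  assert (Hg : (0 < g)%Z).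
  { assert (g <> 0%Z) by (intro G; apply Z.gcd_eq_0 in G; lia).
    pose proof (Z.gcd_nonneg y x). lia. }
  destruct (Z.gcd_divide_l y x) as [p Hp]. destruct (Z.gcd_divide_r y x) as [q Hq].
  fold g in Hp, Hq.
  exists p, q. split; [nia | split].
  - replace p with (y / g)%Z by (rewrite Hp, Z.div_mul; lia).
    replace q with (x / g)%Z by (rewrite Hq, Z.div_mul; lia).
    apply Z.gcd_div_gcd; [lia | reflexivity].
  - assert (0 < IZR g) by (apply IZR_lt; exact Hg).
    assert (0 < IZR q) by (apply IZR_lt; nia).
    rewrite Hp, Hq, !mult_IZR. field. lra.
Qed.

(* Excluding the three integers nearest to [th] forces a denominator [q >= 2]. *)
Lemma Liouville_approx_pow th n : Liouville th -> (1 <= n)%nat ->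
  exists p q, (2 <= q)%Z /\ Z.gcd p q = 1%Z /\
    Rabs (th - IZR p / IZR q) <= / IZR q ^ n.
Proof.
  intros [_ HL] Hn.
  assert (Hn0 : 0 < INR n) by (apply lt_0_INR; lia).
  destruct (HL (INR n) Hn0 (IZR (up th - 2) :: IZR (up th - 1) :: IZR (up th) :: nil))
    as (y & x & Hx & Happ & Hnew).
  destruct (reduce_fraction y x Hx) as (p & q & Hqx & Hg & Hval).
  rewrite Hval in Happ, Hnew.
  assert (HqR : 1 <= IZR q) by (apply IZR_le; lia).
  assert (HqxR : IZR q <= IZR x) by (apply IZR_le; lia).
  rewrite Rpower_Ropp, Rpower_pow in Happ by lra.
  assert (Hmono : / IZR x ^ n <= / IZR q ^ n)
    by (apply Rinv_le_contravar; [apply pow_lt; lra | apply pow_incr; lra]).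
  exists p, q. split; [|split; [exact Hg | lra]].
  destruct (Z.eq_dec q 1) as [E | E]; [exfalso | lia].
  apply Hnew. subst q. rewrite pow1, Rinv_1 in Hmono.
  change (IZR 1) with 1 in *. rewrite Rdiv_1_r in *.
  destruct (archimed th) as [A1 A2].
  pose proof (Rle_abs (th - IZR p)). pose proof (Rle_abs (- (th - IZR p))).
  rewrite Rabs_Ropp in *.
  assert (up th - 3 < p < up th + 1)%Z as Hp
    by (split; apply lt_IZR; rewrite ?minus_IZR, ?plus_IZR; lra).
  destruct (Z.eq_dec p (up th - 2)) as [-> | ]; [left; reflexivity |].
  destruct (Z.eq_dec p (up th - 1)) as [-> | ]; [right; left; reflexivity |].
  right; right; left. f_equal. lia.
Qed.

Lemma Liouville_pow_approx th b K m : Liouville th -> 0 <= K ->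
  exists p q, (2 <= q)%Z /\ Z.gcd p q = 1%Z /\
    K * (IZR q ^ b * Rabs (th ^ b - (IZR p / IZR q) ^ b)) < / IZR q ^ m.
Proof.
  intros HL HK.
  set (C := INR b * (Rabs th + 1) ^ b).
  assert (HC : 0 <= C)
    by (apply Rmult_le_pos; [apply pos_INR | apply pow_le; pose proof (Rabs_pos th); lra]).
  destruct (INR_archimed 1 (K * C) ltac:(lra)) as [k Hk]. rewrite Rmult_1_r in Hk.
  assert (Hk0 : (1 <= k)%nat)
    by (destruct k; [simpl in Hk; pose proof (Rmult_le_pos _ _ HK HC); lra | lia]).
  destruct (Liouville_approx_pow th (b + m + k) HL ltac:(lia)) as (p & q & Hq & Hg & Happ).
  exists p, q. split; [exact Hq | split; [exact Hg |]].
  set (w := IZR p / IZR q) in *. set (Q := IZR q) in *.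
  assert (HQ : 2 <= Q) by (apply IZR_le; exact Hq).
  assert (HQb : 0 < Q ^ b) by (apply pow_lt; lra).
  assert (HQm : 0 < Q ^ m) by (apply pow_lt; lra).
  assert (HQk : INR k <= Q ^ k) by (apply INR_le_pow; exact HQ).
  assert (HQk0 : 0 < Q ^ k) by (apply pow_lt; lra).
  assert (Hsplit : / Q ^ (b + m + k) = / Q ^ b * / Q ^ m * / Q ^ k)
    by (rewrite !pow_add, !Rinv_mult; reflexivity).
  assert (Hsmall : / Q ^ (b + m + k) <= 1)
    by (rewrite <- Rinv_1; apply Rinv_le_contravar; [lra | apply pow_R1_Rle; lra]).
  assert (Hw : Rabs w <= Rabs th + 1).
  { replace w with (th - (th - w)) by ring.
    eapply Rle_trans; [apply Rabs_triang|]. rewrite Rabs_Ropp. lra. }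
  assert (Hdiff : Rabs (th ^ b - w ^ b) <= C * / Q ^ (b + m + k)).
  { eapply Rle_trans.
    - apply (Rabs_pow_sub_le b th w (Rabs th + 1)); [pose proof (Rabs_pos th); lra | lra | exact Hw].
    - apply Rmult_le_compat_l; [exact HC | exact Happ]. }
  rewrite Hsplit in Hdiff.
  assert (HKC : K * C * / Q ^ k < 1).
  { apply (Rmult_lt_reg_r (Q ^ k)); [lra|].
    replace (K * C * / Q ^ k * Q ^ k) with (K * C) by (field; lra). lra. }
  apply Rle_lt_trans with (K * C * / Q ^ k * / Q ^ m).
  - replace (K * C * / Q ^ k * / Q ^ m) with (K * (Q ^ b * (C * (/ Q ^ b * / Q ^ m * / Q ^ k))))
      by (field; repeat split; lra).
    apply Rmult_le_compat_l; [exact HK|]. apply Rmult_le_compat_l; lra.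
  - assert (0 < / Q ^ m) by (apply Rinv_0_lt_compat; lra). nra.
Qed.

Lemma Liouville_pow_irrational th b : Liouville th -> (1 <= b)%nat -> irrational (th ^ b).
Proof.
  intros HL Hb u v Hv Heq.
  destruct (Liouville_pow_approx th b (Rabs (IZR v)) 0 HL (Rabs_pos _))
    as (p & q & Hq & _ & Hclose).
  rewrite pow_O, Rinv_1 in Hclose.
  set (w := IZR p / IZR q) in *.
  assert (HvR : IZR v <> 0) by (apply not_0_IZR; exact Hv).
  assert (HqR : 2 <= IZR q) by (apply IZR_le; exact Hq).
  assert (Hqb : 0 < IZR q ^ b) by (apply pow_lt; lra).
  set (D := (u * q ^ Z.of_nat b - v * p ^ Z.of_nat b)%Z).
  assert (HD : IZR D = IZR v * IZR q ^ b * (th ^ b - w ^ b)).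
  { unfold D. rewrite minus_IZR, !mult_IZR, <- !pow_IZR.
    replace (IZR u) with (th ^ b * IZR v) by (rewrite Heq; field; exact HvR).
    unfold w, Rdiv. rewrite Rpow_mult_distr, pow_inv. field. lra. }
  (* [D] is an integer of absolute value < 1, so [th ^ b = w ^ b] and [th = +- w]. *)
  assert (HD0 : D = 0%Z).
  { assert (Z.abs D < 1)%Z; [|lia].
    apply lt_IZR. rewrite abs_IZR, HD, !Rabs_mult, (Rabs_right (IZR q ^ b)) by lra.
    lra. }
  rewrite HD0 in HD.
  assert (Hpow : th ^ b = w ^ b).
  { symmetry in HD. apply Rmult_integral in HD as [H0 | H0]; [|lra].
    apply Rmult_integral in H0 as [H0 | H0]; lra. }
  apply pow_eq_Rabs in Hpow; [|lia].
  destruct HL as [Hirr _]. assert (Hq0 : q <> 0%Z) by lia.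
  unfold Rabs in Hpow. destruct (Rcase_abs th), (Rcase_abs w).
  - apply (Hirr p q Hq0). fold w. lra.
  - apply (Hirr (- p)%Z q Hq0). rewrite opp_IZR. unfold w in Hpow. field_simplify; lra.
  - apply (Hirr (- p)%Z q Hq0). rewrite opp_IZR. unfold w in Hpow. field_simplify; lra.
  - apply (Hirr p q Hq0). fold w. lra.
Qed.

Lemma Liouville_pow_int_approx th b eta : Liouville th -> 0 < eta ->
  exists p q, (1 <= q)%Z /\ Z.gcd p q = 1%Z /\
    Rabs (IZR q ^ b * th ^ b - IZR p ^ b) <= Rpower (IZR q) (- eta).
Proof.
  intros HL Heta.
  destruct (INR_archimed 1 eta ltac:(lra)) as [m Hm]. rewrite Rmult_1_r in Hm.
  destruct (Liouville_pow_approx th b 1 m HL ltac:(lra)) as (p & q & Hq & Hg & Hclose).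
  exists p, q. split; [lia | split; [exact Hg |]].
  assert (HqR : 2 <= IZR q) by (apply IZR_le; exact Hq).
  replace (IZR q ^ b * th ^ b - IZR p ^ b)
    with (IZR q ^ b * (th ^ b - (IZR p / IZR q) ^ b))
    by (unfold Rdiv; rewrite Rpow_mult_distr, pow_inv; field; apply pow_nonzero; lra).
  rewrite Rabs_mult, (Rabs_right (IZR q ^ b)) by (apply Rle_ge, pow_le; lra).
  rewrite Rmult_1_l in Hclose. apply Rlt_le, (Rlt_le_trans _ _ _ Hclose).
  rewrite Rpower_Ropp, <- Rpower_pow by lra.
  apply Rinv_le_contravar; [apply exp_pos | apply Rle_Rpower; lra].
Qed.

Lemma Rpower_neg_eventually_lt e c : 0 < e -> 0 < c ->
  exists Q : Z, (1 <= Q)%Z /\ forall q : Z, (Q <= q)%Z -> Rpower (IZR q) (- e) < c.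
Proof.
  intros He Hc.
  set (t := exp (- ln c / e)).
  destruct (archimed t) as [Hup _].
  assert (Ht : 0 < t) by apply exp_pos.
  exists (up t). split; [assert (0 < up t)%Z by (apply lt_IZR; lra); lia |].
  intros q Hq. apply IZR_le in Hq.
  assert (Hlnq : - ln c / e < ln (IZR q)).
  { rewrite <- (ln_exp (- ln c / e)). apply ln_increasing; [apply exp_pos | fold t; lra]. }
  rewrite <- (exp_ln c) by exact Hc. unfold Rpower. apply exp_increasing.
  apply (Rmult_lt_compat_l e) in Hlnq; [|exact He].
  replace (e * (- ln c / e)) with (- ln c) in Hlnq by (field; lra). lra.
Qed.

Lemma pow_approx_is_convergent y b eta : irrational y -> INR b < eta ->
  exists Q : Z, forall p q : Z, (1 <= q)%Z -> (Q <= q)%Z ->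
    Rabs (IZR q ^ b * y - IZR p ^ b) <= Rpower (IZR q) (- eta) ->
    is_convergent y (IZR p ^ b / IZR q ^ b).
Proof.
  intros Hy Heta.
  destruct (Rpower_neg_eventually_lt (eta - INR b) (/ 2) ltac:(lra) ltac:(lra))
    as (Q & _ & HQ).
  exists Q. intros p q Hq HQq Hclose.
  assert (HqR : 1 <= IZR q) by (apply IZR_le; exact Hq).
  assert (Hqb : 0 < IZR q ^ b) by (apply pow_lt; lra).
  assert (Hsmall : IZR q ^ b * Rpower (IZR q) (- eta) < / 2).
  { rewrite <- Rpower_pow, <- Rpower_plus by lra.
    replace (INR b + - eta) with (- (eta - INR b)) by ring. apply HQ, HQq. }
  rewrite (pow_IZR q), (pow_IZR p) in *.
  apply legendre_convergent; [exact Hy | apply lt_IZR in Hqb; lia |].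
  assert (IZR (q ^ Z.of_nat b) * Rabs (IZR (q ^ Z.of_nat b) * y - IZR (p ^ Z.of_nat b))
          <= IZR (q ^ Z.of_nat b) * Rpower (IZR q) (- eta))
    by (apply Rmult_le_compat_l; [lra | exact Hclose]).
  lra.
Qed.

Lemma Rpower_div_pow z a b : (1 <= b)%nat -> 0 < z ->
  Rpower z (IZR a / INR b) ^ b = powerRZ z a.
Proof.
  intros Hb Hz. rewrite <- Rpower_pow by (unfold Rpower; apply exp_pos).
  rewrite Rpower_mult, powerRZ_Rpower by exact Hz. f_equal.
  field. apply not_0_INR. lia.
Qed.

Theorem lemma6p4 (a : Z) (b : nat) (zeta : R) :
  (1 <= b)%nat ->
  Z.gcd a (Z.of_nat b) = 1%Z ->
  0 < zeta ->
  Liouville zeta ->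
  Liouville (Rpower zeta (IZR a / INR b)) ->
  (forall eta : R, 0 < eta ->
     exists p q : Z, (1 <= q)%Z /\ Z.gcd p q = 1%Z /\
       Rabs (IZR q ^ b * powerRZ zeta a - IZR p ^ b) <= Rpower (IZR q) (- eta))
  /\
  (forall eta : R, INR b < eta ->
     exists Q : Z, forall p q : Z,
       (1 <= q)%Z -> (Q <= q)%Z -> Z.gcd p q = 1%Z ->
       Rabs (IZR q ^ b * powerRZ zeta a - IZR p ^ b) <= Rpower (IZR q) (- eta) ->
       is_convergent (powerRZ zeta a) (IZR p ^ b / IZR q ^ b)).
Proof.
  intros Hb _ Hzeta _ HL.
  rewrite <- (Rpower_div_pow zeta a b Hb Hzeta).
  split.
  - intros eta Heta. exact (Liouville_pow_int_approx _ b eta HL Heta).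
  - intros eta Heta.
    destruct (pow_approx_is_convergent _ b eta (Liouville_pow_irrational _ b HL Hb) Heta)
      as [Q HQ].
    exists Q. intros p q Hq HQq _. exact (HQ p q Hq HQq).
Qed.
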